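(* Let $f\in\Gamma=\mathbb Q[p_1,p_3,p_5,\dots]$ be homogeneous of degree $n\ge1$, and write $$f=\sum_{\substack{\lambda\vdash n\\ \text{all parts odd}}}a_\lambda V_\lambda=\sum_{\lambda}b_\lambda P_\lambda,$$ the second sum over partitions $\lambda$ of $n$ into distinct parts. Then $\sum_\lambda a_\lambda=b_{(n)}$, the coefficient of the one-row function $P_n$.
   Context: Symmetric functions are in variables $x=(x_1,x_2,\dots)$ with rational coefficients, $p_k$ is the power sum, and $\Gamma=\mathbb Q[p_1,p_3,p_5,\dots]$. For a partition $\lambda$ with distinct parts, $P_\lambda$ is Schur's $P$-function (as in Macdonald, Ch. III.8); the $P_\lambda$ with $\lambda$ strict of size $n$ form a basis of the degree-$n$ part of $\Gamma$. The one-row functions satisfy $1+2\sum_{n\ge1}P_n(x)t^n=\prod_i\frac{1+x_it}{1-x_it}$. For any partition $\lambda$, $V_\lambda=P_{\lambda_1}P_{\lambda_2}\cdots$; the $V_\lambda$ with $\lambda$ having only odd parts form a basis of $\Gamma$. *)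

From HB Require Import structures.
From mathcomp Require Import all_boot all_order all_algebra all_fingroup.
From mathcomp Require Import mpoly.
From Stdlib Require Import ClassicalEpsilon.
Set Implicit Arguments. Unset Strict Implicit. Unset Printing Implicit Defensive.
Import Order.TTheory GRing.Theory Num.Theory.
Local Open Scope ring_scope.

(* Symmetric functions of degree n are modelled by their restriction to
   n variables x_0,...,x_(n-1), i.e. in {mpoly rat[n]}; the restriction map
   Lambda^n -> Q[x_1..x_n]^{S_n} is injective. *)

Fixpoint seqs_of_len (k n : nat) : seq (seq nat) :=
  match k with
  | 0 => [:: [::]]
  | k'.+1 => [seq x :: s | x <- iota 1 n, s <- seqs_of_len k' n]
  end.

(* All lists of length <= n with entries in 1..n (contains every partition of n). *)
Definition small_seqs (n : nat) : seq (seq nat) :=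
  undup (flatten [seq seqs_of_len k n | k <- iota 0 n.+1]).

Definition is_odd_partition (n : nat) (l : seq nat) : bool :=
  [&& sorted geq l, all (fun k => (0 < k)%N && odd k) l & sumn l == n].

Definition is_strict_partition (n : nat) (l : seq nat) : bool :=
  [&& sorted gtn l, all (fun k => (0 < k)%N) l & sumn l == n].

Definition odd_partitions (n : nat) : seq (seq nat) :=
  [seq l <- small_seqs n | is_odd_partition n l].

Definition strict_partitions (n : nat) : seq (seq nat) :=
  [seq l <- small_seqs n | is_strict_partition n l].

Section SchurP.
Variable m : nat.

Definition vdm : {mpoly rat[m]} :=
  \prod_(i < m) \prod_(j < m | (i < j)%N) ('X_i - 'X_j).

(* For strict lambda of length l:
   G_lambda = x^lambda * prod_{i<l, i<j} (x_i + x_j) * prod_{l<=i<j} (x_i - x_j)  (0-indexed),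
   so that  x^lambda prod_{i<l,i<j} (x_i+x_j)/(x_i-x_j) = G_lambda / vdm. *)
Definition schurG (lam : seq nat) : {mpoly rat[m]} :=
  (\prod_(i < m | (i < size lam)%N) 'X_i ^+ nth 0%N lam i)
  * (\prod_(i < m | (i < size lam)%N) \prod_(j < m | (i < j)%N) ('X_i + 'X_j))
  * (\prod_(i < m | (size lam <= i)%N) \prod_(j < m | (i < j)%N) ('X_i - 'X_j)).

Definition schurA (lam : seq nat) : {mpoly rat[m]} :=
  \sum_(s : 'S_m) (-1) ^+ odd_perm s *: msym s (schurG lam).

(* Macdonald III.8 (2.2):
     P_lambda(x_1..x_m) = sum_{w in S_m/S_{m-l}} w( x^lambda prod_{i<=l, i<j} (x_i+x_j)/(x_i-x_j) ),
   equivalently  (m-l)! * P_lambda * vdm = schurA lambda. *)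
Definition is_schurP (lam : seq nat) (p : {mpoly rat[m]}) : Prop :=
  ((m - size lam)`!)%:R *: (p * vdm) = schurA lam.

Definition schurP (lam : seq nat) : {mpoly rat[m]} :=
  epsilon (inhabits 0) (is_schurP lam).

Definition schurV (lam : seq nat) : {mpoly rat[m]} :=
  \prod_(k <- lam) schurP [:: k].

End SchurP.

(* Evaluate the identity at x = (1, 0, ..., 0), n variables being enough in
   degree n. Every one-row function P_k takes the value 1 there, hence so does
   every V_lambda, whereas every P_lambda with at least two parts vanishes; the
   identity then collapses to sum_lambda a_lambda = b_(n).

   P_lambda is only known through (n - l)! P_lambda Delta = A_lambda, where
   A_lambda = sum_w sgn(w) w(G_lambda) is antisymmetric (hence divisible by the
   Vandermonde product Delta, which makes P_lambda well defined) and Delta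
   vanishes at our point. So we evaluate along the curve
   x(t) = (1, t, 2t, ..., (n-1)t) instead: each w(G_lambda) and Delta become
   t^E times a polynomial for the same exponent E = (n-1 choose 2). After
   cancelling t^E and putting t = 0, the factor x^lambda kills the term of w
   unless w sends all of x_1, ..., x_l to x_1, which forces l <= 1. *)

From HB Require Import structures.
From mathcomp Require Import all_boot all_order all_algebra all_fingroup.
From mathcomp Require Import mpoly ring.
From Stdlib Require Import ClassicalEpsilon.
Set Implicit Arguments. Unset Strict Implicit. Unset Printing Implicit Defensive.
Import Order.TTheory GRing.Theory Num.Theory.
Local Open Scope ring_scope.

Section MPolyMorphisms.
Variables (N : nat) (R : comNzRingType) (S : comNzRingType).

Lemma mpoly_ind_ring (P : {mpoly R[N]} -> Prop) :
  (forall c, P c%:MP) -> (forall i, P 'X_i) ->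
  (forall p q, P p -> P q -> P (p + q)) -> (forall p q, P p -> P q -> P (p * q)) ->
  forall p, P p.
Proof.
move=> PC PX PD PM p; rewrite (mpolyE p).
have P0 : P 0 by rewrite -mpolyC0.
apply: (big_ind P) => // m _; rewrite -mul_mpolyC; apply: (PM) => //.
rewrite mpolyXE_id; apply: (big_ind P) => [|//|i _]; first by rewrite -mpolyC1.
by elim: (m i) => [|k IHk]; rewrite ?expr0 -?mpolyC1 // exprS; apply: (PM).
Qed.

Lemma rmorph_eq_mmap (f : {rmorphism R -> S}) (h : 'I_N -> S)
    (g : {rmorphism {mpoly R[N]} -> S}) :
  (forall c, g c%:MP = f c) -> (forall i, g 'X_i = h i) -> g =1 mmap f h.
Proof.
move=> gC gX; apply: mpoly_ind_ring => [c|i|p q Ep Eq|p q Ep Eq].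
- by rewrite gC mmapC.
- by rewrite gX mmapX mmap1U.
- by rewrite !rmorphD /= Ep Eq.
- by rewrite !rmorphM /= Ep Eq.
Qed.

Lemma mmapXU (f : {rmorphism R -> S}) (h : 'I_N -> S) i : mmap f h 'X_i = h i.
Proof. by rewrite mmapX mmap1U. Qed.

Lemma mmap_eq (f : R -> S) (h1 h2 : 'I_N -> S) p :
  h1 =1 h2 -> mmap f h1 p = mmap f h2 p.
Proof. by move=> eq_h; apply: eq_bigr => m _; rewrite (mmap1_eq _ eq_h). Qed.

Lemma msymXU (s : 'S_N) i : msym s ('X_i : {mpoly R[N]}) = 'X_(s i).
Proof. by rewrite /msym mmapX mmap1U. Qed.

Lemma mmap_msym (f : {rmorphism R -> S}) (h : 'I_N -> S) (s : 'S_N) p :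
  mmap f h (msym s p) = mmap f (h \o s) p.
Proof.
apply: (@rmorph_eq_mmap f (h \o s) (mmap f h \o msym s)) => [c|i] /=.
  by rewrite /msym mmapC !mmapC.
by rewrite msymXU mmapXU.
Qed.

End MPolyMorphisms.

Lemma prod_ltn_perm (R : comNzRingType) (N : nat) (a : 'I_N -> R) (w : 'S_N) :
  \prod_(i < N) \prod_(j < N | (i < j)%N) (a (w i) - a (w j)) =
  (-1) ^+ w * \prod_(i < N) \prod_(j < N | (i < j)%N) (a i - a j).
Proof.
pose sgn_pairs : R := \prod_(i < N) (-1) ^+ #|[pred j : 'I_N | (i < j)%N]|.
have prodE (b : 'I_N -> R) : \prod_(i < N) \prod_(j < N | (i < j)%N) (b i - b j)
    = sgn_pairs * \det (Vandermonde N (\row_k b k)).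
  rewrite det_Vandermonde -big_split /=; apply: eq_bigr => i _.
  by rewrite -prodrN; apply: eq_bigr => j _; rewrite !mxE opprB.
rewrite !prodE mulrCA; congr (_ * _).
have -> : Vandermonde N (\row_k a (w k)) = col_perm w (Vandermonde N (\row_k a k)).
  by apply/matrixP => i j; rewrite !mxE.
by rewrite col_permE det_mulmx det_perm odd_permV mulrC.
Qed.

Lemma msym_vdm (N : nat) (w : 'S_N) : msym w (vdm N) = (-1) ^+ w *: vdm N.
Proof.
have msym_XB i j : msym w ('X_i - 'X_j) = 'X_(w i) - 'X_(w j) :> {mpoly rat[N]}.
  by rewrite msymB !msymXU.
rewrite -mul_mpolyC rmorph_sign -(prod_ltn_perm (fun k => 'X_k)) /vdm rmorph_prod.
by apply: eq_bigr => i _; rewrite rmorph_prod; apply: eq_bigr => j _; apply: msym_XB.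
Qed.

Section ReplaceVariable.
Variables (N : nat) (R : idomainType).
Implicit Types (a b i j : 'I_N) (p : {mpoly R[N]}).

Definition mrepl a b p : {mpoly R[N]} :=
  mmap (@mpolyC N R) (fun k => if k == b then 'X_a else 'X_k) p.

Lemma mreplXU a b i : mrepl a b 'X_i = if i == b then 'X_a else 'X_i.
Proof. exact: mmapXU. Qed.

Lemma mrepl_msym_tperm a b p : mrepl a b (msym (tperm a b) p) = mrepl a b p.
Proof.
rewrite /mrepl mmap_msym; apply: mmap_eq => k /=.
by case: tpermP => [->|->|_ _]; rewrite ?eqxx //; case: eqP => // ->.
Qed.

Lemma subr_mrepl_dvd a b p : exists q, p - mrepl a b p = ('X_b - 'X_a) * q.
Proof.
elim/mpoly_ind_ring: p => [c|k|p p' [q Eq] [q' Eq']|p p' [q Eq] [q' Eq']].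
- by exists 0; rewrite /mrepl mmapC subrr mulr0.
- exists (k == b)%:R; rewrite mreplXU.
  by case: eqP => [->|_]; rewrite ?mulr1 ?mulr0 ?subrr.
- by exists (q + q'); rewrite /mrepl rmorphD /= opprD addrACA -!/(mrepl _ _ _) Eq Eq' mulrDr.
- exists (p * q' + q * mrepl a b p').
  have -> : p * p' - mrepl a b (p * p') =
      p * (p' - mrepl a b p') + (p - mrepl a b p) * mrepl a b p'.
    by rewrite /mrepl rmorphM /=; ring.
  by rewrite Eq Eq'; ring.
Qed.

Lemma subr_mpolyX_neq0 i j : i != j -> 'X_i - 'X_j != 0 :> {mpoly R[N]}.
Proof.
move=> neq_ij; apply/eqP => /(congr1 (mcoeff U_(i))).
rewrite mcoeffB !mcoeffXU eqxx eq_sym (negbTE neq_ij) subr0 mcoeff0.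
by move/eqP; rewrite oner_eq0.
Qed.

Lemma mrepl_subr_neq0 a b i j : (a < b)%N -> (i < j)%N -> (i, j) != (a, b) ->
  mrepl a b ('X_i - 'X_j) != 0.
Proof.
move=> lt_ab lt_ij neq_ij_ab; rewrite /mrepl rmorphB /= -!/(mrepl _ _ _) !mreplXU.
case: (eqVneq i b) => [eq_ib|nib]; case: (eqVneq j b) => [eq_jb|njb].
- by move: lt_ij; rewrite eq_ib eq_jb ltnn.
- have lt_aj : (a < j)%N by rewrite (ltn_trans lt_ab) // -eq_ib.
  by apply: subr_mpolyX_neq0; rewrite neq_ltn lt_aj.
- by apply: subr_mpolyX_neq0; apply: contraNneq neq_ij_ab => <-; rewrite eq_jb.
- by apply: subr_mpolyX_neq0; rewrite neq_ltn lt_ij.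
Qed.

Lemma dvd_prod_subr_mpolyX (r : seq ('I_N * 'I_N)) p :
  uniq r -> all (fun e : 'I_N * 'I_N => (e.1 < e.2)%N) r ->
  (forall e, e \in r -> mrepl e.1 e.2 p = 0) ->
  exists q, p = \prod_(e <- r) ('X_e.1 - 'X_e.2) * q.
Proof.
elim: r => [|[a b] r IHr] /=; first by exists p; rewrite big_nil mul1r.
move=> /andP[abNr uniq_r] /andP[lt_ab lt_r] p_vanish.
have [q Ep] : exists q, p = \prod_(e <- r) ('X_e.1 - 'X_e.2) * q.
  by apply: IHr => // e er; apply: p_vanish; rewrite inE er orbT.
have /= /eqP := p_vanish (a, b) (mem_head _ _).
rewrite Ep /mrepl rmorphM rmorph_prod /= -!/(mrepl _ _ _) mulf_eq0 prodf_seq_eq0.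
case/orP => [/hasP[[i j] ijr /=]|/eqP mrepl_q0].
  rewrite -/(mrepl _ _ _) (negbTE (mrepl_subr_neq0 lt_ab (allP lt_r _ ijr) _)) //.
  by apply: contraNneq abNr => <-.
have [q' ] := subr_mrepl_dvd a b q; rewrite mrepl_q0 subr0 => ->.
by exists (- q'); rewrite big_cons; ring.
Qed.

End ReplaceVariable.

Lemma antisym_vdm_dvd (N : nat) (p : {mpoly rat[N]}) :
  (forall a b : 'I_N, a != b -> msym (tperm a b) p = - p) ->
  exists q, p = vdm N * q.
Proof.
move=> p_antisym.
have -> : vdm N = \prod_(e <- [seq e : 'I_N * 'I_N <- index_enum ('I_N * 'I_N)%type
                                 | (e.1 < e.2)%N]) ('X_e.1 - 'X_e.2).
  by rewrite big_filter /vdm pair_big_dep.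
apply: dvd_prod_subr_mpolyX.
- by rewrite filter_uniq // index_enum_uniq.
- by apply/allP => e; rewrite mem_filter => /andP[].
move=> [a b]; rewrite mem_filter /= => /andP[lt_ab _].
have mreplN : mrepl a b p = - mrepl a b p.
  by rewrite -{1}mrepl_msym_tperm p_antisym ?neq_ltn ?lt_ab // /mrepl rmorphN.
have /eqP : 2%:R *: mrepl a b p = 0 by rewrite scaler_nat mulr2n {1}mreplN addNr.
by rewrite scaler_eq0 pnatr_eq0 => /eqP.
Qed.

Lemma schurA_antisym (N : nat) lam (a b : 'I_N) : a != b ->
  msym (tperm a b) (schurA N lam) = - schurA N lam.
Proof.
move=> neq_ab; rewrite /schurA raddf_sum /= -sumrN.
rewrite [RHS](reindex_inj (mulIg (tperm a b))) /=.
apply: eq_bigr => s _; rewrite msymZ -msymMm odd_permM odd_tperm neq_ab.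
by rewrite signr_addb expr1 mulrN1 scaleNr opprK.
Qed.

Lemma schurP_spec (N : nat) lam : is_schurP lam (schurP N lam).
Proof.
apply: epsilon_spec; have [q schurAE] := antisym_vdm_dvd (@schurA_antisym N lam).
have fact_neq0 : ((N - size lam)`!)%:R != 0 :> rat by rewrite pnatr_eq0 -lt0n fact_gt0.
exists (((N - size lam)`!)%:R^-1 *: q).
by rewrite /is_schurP schurAE -scalerAl scalerA divff // scale1r mulrC.
Qed.

Lemma mulXn_eq (a b : nat) (u v : {poly rat}) :
  'X^a * u = 'X^b * v -> u.[0] != 0 -> v.[0] != 0 -> a = b /\ u = v.
Proof.
wlog le_ab : a b u v / (a <= b)%N.
  move=> wlog_ab Euv u0 v0; have [/wlog_ab|/ltnW/wlog_ab] := leqP a b; first exact.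
  by case/(_ v u (esym Euv) v0 u0) => -> ->.
have Xa_neq0 : 'X^a != 0 :> {poly rat} by rewrite monic_neq0 ?monicXn.
rewrite -(subnKC le_ab) exprD -mulrA => /(mulfI Xa_neq0) ->.
case: (b - a)%N => [|d]; first by rewrite addn0 expr0 mul1r.
by rewrite hornerM hornerXn expr0n mul0r eqxx.
Qed.

Section CurveSpecialization.
Variable n : nat.
Implicit Types (w : 'S_n.+1) (i j : 'I_n.+1) (p : {mpoly rat[n.+1]}) (lam : seq nat).

Definition curve_pt (k : 'I_n.+1) : {poly rat} := if k == ord0 then 1 else k%:R *: 'X.

Definition curve w : {mpoly rat[n.+1]} -> {poly rat} := mmap (@polyC rat) (curve_pt \o w).

Lemma curveXU w i : curve w 'X_i = curve_pt (w i).
Proof. exact: mmapXU. Qed.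

Lemma curveZ w c p : curve w (c *: p) = c%:P * curve w p.
Proof. exact: mmapZ. Qed.

Lemma curve_msym w p : curve 1 (msym w p) = curve w p.
Proof. by rewrite /curve mmap_msym; apply: mmap_eq => k /=; rewrite perm1. Qed.

Definition e0 (k : 'I_n.+1) : rat := (k == ord0)%:R.

Lemma horner0_curve w p : (curve w p).[0] = p.@[e0 \o w].
Proof.
apply: (@rmorph_eq_mmap _ _ _ idfun _ (horner_eval 0 \o curve w)) => [c|i] /=.
  by rewrite /horner_eval /curve mmapC hornerC.
rewrite /horner_eval /curve mmapXU /curve_pt /e0 /=; case: eqP => _; first by rewrite hornerC.
by rewrite hornerZ hornerX mulr0.
Qed.

Definition pair_order w i j : nat := (w i != ord0) && (w j != ord0).

Definition pair_low w i j (e : rat) : {poly rat} :=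
  if (w i != ord0) && (w j != ord0) then ((w i)%:R + e * (w j)%:R)%:P
  else curve w ('X_i + e *: 'X_j).

Lemma curve_pair w i j e :
  curve w ('X_i + e *: 'X_j) = 'X^(pair_order w i j) * pair_low w i j e.
Proof.
rewrite /pair_order /pair_low; case: ifP => [/andP[wi wj]|_]; last by rewrite expr0 mul1r.
rewrite /curve rmorphD /= -!/(curve _ _) curveZ !curveXU /curve_pt (negbTE wi) (negbTE wj).
by rewrite expr1 polyCD polyCM -!mul_polyC; ring.
Qed.

Lemma horner0_curve_pair w i j e :
  (curve w ('X_i + e *: 'X_j)).[0] = e0 (w i) + e * e0 (w j).
Proof. by rewrite horner0_curve mevalD mevalZ !mevalXU. Qed.

Lemma pair_low0_neq0 w i j e : i != j -> (e == 1) || (e == -1) ->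
  (pair_low w i j e).[0] != 0.
Proof.
move=> neq_ij e_sign; have neq_wij : w i != w j by rewrite (inj_eq perm_inj).
rewrite /pair_low; case: ifP => [/andP[wi wj]|nz_ij].
  rewrite hornerC; case/orP: e_sign => /eqP ->.
    by move: wi; rewrite mul1r -natrD pnatr_eq0 addn_eq0 negb_and -val_eqE /= => ->.
  by rewrite mulN1r subr_eq0 eqr_nat val_eqE.
rewrite horner0_curve_pair /e0.
case: (eqVneq (w i) ord0) => [wi0|wi0]; case: (eqVneq (w j) ord0) => [wj0|wj0].
- by rewrite wi0 wj0 eqxx in neq_wij.
- by rewrite mulr0 addr0 oner_eq0.
- by rewrite mulr1 add0r; case/orP: e_sign => /eqP ->; rewrite ?oppr_eq0 oner_eq0.
- by rewrite wi0 wj0 in nz_ij.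
Qed.

Lemma pair_low0_eq1 w i j e : i != j -> w i = ord0 -> (pair_low w i j e).[0] = 1.
Proof.
move=> neq_ij wi0; have neq_wij : w i != w j by rewrite (inj_eq perm_inj).
rewrite /pair_low wi0 eqxx /= horner0_curve_pair /e0 wi0 eqxx.
by rewrite eq_sym -wi0 (negbTE neq_wij) mulr0 addr0.
Qed.

Definition prod_pairs (e : 'I_n.+1 -> rat) : {mpoly rat[n.+1]} :=
  \prod_(i < n.+1) \prod_(j < n.+1 | (i < j)%N) ('X_i + e i *: 'X_j).

Definition pairs_order w : nat :=
  \sum_(i < n.+1) \sum_(j < n.+1 | (i < j)%N) pair_order w i j.

Definition pairs_low w (e : 'I_n.+1 -> rat) : {poly rat} :=
  \prod_(i < n.+1) \prod_(j < n.+1 | (i < j)%N) pair_low w i j (e i).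

Lemma curve_prod_pairs w e :
  curve w (prod_pairs e) = 'X^(pairs_order w) * pairs_low w e.
Proof.
rewrite /curve rmorph_prod -prodrXr -big_split; apply: eq_bigr => i _ /=.
rewrite rmorph_prod -prodrXr -big_split; apply: eq_bigr => j _ /=.
exact: curve_pair.
Qed.

Lemma pairs_low0_neq0 w e : (forall i, (e i == 1) || (e i == -1)) ->
  (pairs_low w e).[0] != 0.
Proof.
move=> e_sign; rewrite horner_prod; apply/prodf_neq0 => i _.
rewrite horner_prod; apply/prodf_neq0 => j lt_ij.
by apply: pair_low0_neq0; rewrite ?neq_ltn ?lt_ij.
Qed.

Lemma vdm_prod_pairs : vdm n.+1 = prod_pairs (fun _ => -1).
Proof.
by apply: eq_bigr => i _; apply: eq_bigr => j _; rewrite scaleN1r.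
Qed.

Lemma pairs_low0_neg1_neq0 w : (pairs_low w (fun _ => -1)).[0] != 0.
Proof. by apply: pairs_low0_neq0 => i; rewrite eqxx orbT. Qed.

(* Comparing lowest-order terms in the antisymmetry of Delta shows that the
   t-order of every w(Delta) is the same, without counting pairs. *)
Lemma curve_vdm w : pairs_order w = pairs_order 1 /\
  pairs_low w (fun _ => -1) = ((-1) ^+ w)%:P * pairs_low 1 (fun _ => -1).
Proof.
have := congr1 (curve 1) (msym_vdm w); rewrite curve_msym curveZ vdm_prod_pairs.
rewrite !curve_prod_pairs mulrCA => /mulXn_eq; apply; rewrite ?pairs_low0_neg1_neq0 //.
by rewrite hornerM hornerC mulf_neq0 ?signr_eq0 ?pairs_low0_neg1_neq0.
Qed.

Definition pair_sign lam i : rat := if (i < size lam)%N then 1 else -1.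

Definition lead_mono lam : {mpoly rat[n.+1]} :=
  \prod_(i < n.+1 | (i < size lam)%N) 'X_i ^+ nth 0%N lam i.

Lemma schurG_prod_pairs lam :
  schurG n.+1 lam = lead_mono lam * prod_pairs (pair_sign lam).
Proof.
rewrite /schurG /lead_mono -mulrA; congr (_ * _).
rewrite /prod_pairs [RHS](bigID (fun i : 'I_n.+1 => (i < size lam)%N)) /=; congr (_ * _).
  by apply: eq_bigr => i lt_il; apply: eq_bigr => j _; rewrite /pair_sign lt_il scale1r.
apply: eq_big => [i|i le_li]; first by rewrite leqNgt.
by apply: eq_bigr => j _; rewrite /pair_sign ltnNge le_li scaleN1r.
Qed.

Lemma meval_lead_mono lam (v : 'I_n.+1 -> rat) :
  (lead_mono lam).@[v] = \prod_(i < n.+1 | (i < size lam)%N) v i ^+ nth 0%N lam i.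
Proof. by rewrite rmorph_prod; apply: eq_bigr => i _; rewrite rmorphXn /= mevalXU. Qed.

Lemma schurP_e0_identity lam :
  ((n.+1 - size lam)`!)%:R * (schurP n.+1 lam).@[e0] * (pairs_low 1 (fun _ => -1)).[0] =
  \sum_(w : 'S_n.+1) (-1) ^+ w *
     ((lead_mono lam).@[e0 \o w] * (pairs_low w (pair_sign lam)).[0]).
Proof.
have curve_term (w : 'S_n.+1) :
    curve 1 ((-1) ^+ w *: msym w (schurG n.+1 lam)) =
    'X^(pairs_order 1) *
      (((-1) ^+ w)%:P * (curve w (lead_mono lam) * pairs_low w (pair_sign lam))).
  rewrite curveZ curve_msym schurG_prod_pairs /curve rmorphM /= -!/(curve _ _).
  by rewrite curve_prod_pairs (proj1 (curve_vdm w)) (mulrCA _ 'X^_) (mulrCA _ 'X^_).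
have := congr1 (curve 1) (schurP_spec n.+1 lam).
rewrite /schurA /curve rmorph_sum /= -!/(curve _ _) (eq_bigr _ (fun w _ => curve_term w)).
rewrite -mulr_sumr curveZ /curve rmorphM /= -!/(curve _ _) vdm_prod_pairs curve_prod_pairs.
rewrite (mulrCA _ 'X^_) (mulrCA _ 'X^_) => /mulfI-/(_ (monic_neq0 (monicXn _ _))).
move/(congr1 (horner^~ 0)); rewrite /= !hornerM hornerC horner0_curve horner_sum.
rewrite (meval_eq _ (fun i => congr1 e0 (perm1 i))) mulrA => ->.
by apply: eq_bigr => w _; rewrite !hornerM hornerC horner0_curve.
Qed.

Lemma pairs_low0_row k w : w ord0 = ord0 ->
  (pairs_low w (pair_sign [:: k])).[0] = (pairs_low w (fun _ => -1)).[0].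
Proof.
move=> w0; rewrite !horner_prod; apply: eq_bigr => i _; rewrite !horner_prod.
apply: eq_bigr => j lt_ij; rewrite /pair_sign /=.
case: ifP => // /[!ltnS] /[!leqn0] /eqP i0; have -> : i = ord0 by apply/val_inj.
by rewrite !pair_low0_eq1 // neq_ltn -[X in (X < _)%N]i0 lt_ij.
Qed.

Lemma schurP_e0_eq0 lam : (1 < size lam)%N -> (size lam <= n.+1)%N ->
  all (fun k => 0 < k)%N lam -> (schurP n.+1 lam).@[e0] = 0.
Proof.
move=> long_lam short_lam lam_pos; apply/eqP.
have /eqP := schurP_e0_identity lam; rewrite big1 => [|w _].
  by rewrite !mulf_eq0 pnatr_eq0 gtn_eqF ?fact_gt0 // (negbTE (pairs_low0_neg1_neq0 _)) orbF.
have [i lt_il wi_neq0] : exists2 i : 'I_n.+1, (i < size lam)%N & w i != ord0.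
  have lt_1n : (1 < n.+1)%N := leq_trans long_lam short_lam.
  have [w0|] := eqVneq (w ord0) ord0; last by exists ord0 => //; apply: ltn_trans long_lam.
  by exists (Ordinal lt_1n) => //; rewrite -w0 (inj_eq perm_inj) -val_eqE.
have lam_i_pos : (0 < nth 0%N lam i)%N by exact: (all_nthP 0%N lam_pos).
rewrite meval_lead_mono (bigD1 i) //= {1}/e0 (negbTE wi_neq0) expr0n gtn_eqF //.
by rewrite !mul0r mulr0.
Qed.

Lemma card_perm_fix0 : #|[pred w : 'S_n.+1 | w ord0 == ord0]| = n`!.
Proof.
transitivity #|perm_on [set~ (ord0 : 'I_n.+1)]|; last by rewrite card_perm cardsC1 card_ord.
apply: eq_card => w; rewrite inE; apply/eqP/subsetP => [w0 x|w_on].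
  by rewrite !inE; apply: contraNneq => ->; rewrite w0 eqxx.
by apply/eqP/negPn/negP => /w_on; rewrite !inE eqxx.
Qed.

Lemma schurP_row_e0 k : (0 < k)%N -> (schurP n.+1 [:: k]).@[e0] = 1.
Proof.
move=> k_pos; have := schurP_e0_identity [:: k].
set L1 := (pairs_low 1 _).[0].
have term (w : 'S_n.+1) : (-1) ^+ w *
    ((lead_mono [:: k]).@[e0 \o w] * (pairs_low w (pair_sign [:: k])).[0]) =
    if w ord0 == ord0 then L1 else 0.
  rewrite meval_lead_mono big_mkcond big_ord_recl /= big1 ?mulr1 // /e0.
  case: eqP => [w0|_]; last by rewrite expr0n gtn_eqF // !mul0r mulr0.
  rewrite expr1n mul1r (pairs_low0_row k w0) (proj2 (curve_vdm w)) hornerM hornerC.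
  by rewrite mulrA -signr_addb addbb mul1r.
rewrite (eq_bigr _ (fun w _ => term w)) -big_mkcond sumr_const card_perm_fix0 subn1 /=.
have -> : L1 *+ n`! = n`!%:R * 1 * L1 by rewrite mulr1 mulr_natl.
move=> /(mulIf (pairs_low0_neg1_neq0 _)).
by move=> /mulfI-> //; rewrite pnatr_eq0 gtn_eqF ?fact_gt0.
Qed.

End CurveSpecialization.

Lemma size_le_sumn (l : seq nat) : all (fun k => 0 < k)%N l -> (size l <= sumn l)%N.
Proof. by elim: l => //= k l IHl /andP[k_pos /IHl]; rewrite -add1n; apply: leq_add. Qed.

Lemma uniq_strict_partitions n : uniq (strict_partitions n).
Proof. by rewrite filter_uniq // undup_uniq. Qed.

Lemma row_in_strict_partitions n : (0 < n)%N -> [:: n] \in strict_partitions n.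
Proof.
move=> n_pos; rewrite mem_filter /is_strict_partition /= n_pos addn0 eqxx mem_undup.
apply/flatten_mapP; exists 1%N; first by rewrite mem_iota ltnS.
by apply/allpairsP; exists (n, [::]); rewrite mem_iota /= add1n ltnS leqnn n_pos.
Qed.

Lemma schurP_strict_e0 n l : l \in strict_partitions n.+1 ->
  (schurP n.+1 l).@[@e0 n] = (l == [:: n.+1])%:R.
Proof.
rewrite mem_filter => /andP[/and3P[_ l_pos /eqP sum_l] _].
case: l sum_l l_pos => [//|k [|k' l]] sum_l l_pos.
  by rewrite /= addn0 in sum_l; rewrite sum_l eqxx schurP_row_e0.
rewrite schurP_e0_eq0 //; last by rewrite -sum_l size_le_sumn.
by rewrite eqseq_cons andbF.
Qed.

Lemma schurV_odd_e0 n l : l \in odd_partitions n.+1 -> (schurV n.+1 l).@[@e0 n] = 1.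
Proof.
rewrite mem_filter => /andP[/and3P[_ /allP l_odd _] _].
rewrite rmorph_prod big1_seq // => k /andP[_ /l_odd /andP[k_pos _]].
exact: schurP_row_e0.
Qed.

Unset Implicit Arguments.

Theorem lemma3p5 (n : nat) (a b : seq nat -> rat) :
  (0 < n)%N ->
  \sum_(l <- odd_partitions n) a l *: schurV n l
    = \sum_(l <- strict_partitions n) b l *: schurP n l ->
  \sum_(l <- odd_partitions n) a l = b [:: n].
Proof.
case: n => [//|n] n_pos /(congr1 (meval (@e0 n))); rewrite !raddf_sum /=.
under eq_big_seq => l l_odd do rewrite mevalZ schurV_odd_e0 // mulr1.
move=> ->; rewrite (bigD1_seq _ (row_in_strict_partitions n_pos) (uniq_strict_partitions _)).
rewrite /= big1_seq => [|l /andP[neq_l l_strict]].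
  by rewrite mevalZ schurP_strict_e0 ?row_in_strict_partitions // eqxx mulr1 addr0.
by rewrite mevalZ schurP_strict_e0 // (negbTE neq_l) mulr0.
Qed.
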